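(* Let $n,d,c\in\mathbb{N}$ with $d\ge 50$ and $c\in[d]$, let $\mathcal{F}\subseteq 2^{[n]}$ be a hereditary family with $\delta(\mathcal{F})\ge 2^{d-1}-c+1$, and let $P$ be an isolated pile of $\mathcal{F}$. If $\sum_{x\in P}\omega_{\mathcal{F}}(x)<2^d-c$, then: (1) $P$ contains at most $7$ good vertices; (2) $t\le d+4$; (3) every $N\in\mathcal{N}$ satisfies $|N|\le 3$; (4) for every bad vertex $x\in P$, $\{x\}\in\mathcal{N}$.
   Context: A family is hereditary if it is closed under taking subsets. $d_{\mathcal{F}}(x)=|\{F\in\mathcal{F}:x\in F\}|$, $\delta(\mathcal{F})=\min_x d_{\mathcal{F}}(x)$, $N(x)=\bigcup_{x\in F\in\mathcal{F}}F$. The weight of $x$ is $\omega_{\mathcal{F}}(x)=\sum_{x\in F\in\mathcal{F}}\frac{1}{|F|}$. A vertex $x$ is good if $|N(x)|\ge d+1$ and bad if $|N(x)|=d$. A set $P\subseteq[n]$ with $|P|=d$ is a pile of $\mathcal{F}$ if $P\subseteq N(y)$ for every $y\in P$, and there exists $z\in P$ with $N(z)=P$; a pile is isolated if it is disjoint from every other pile. Given the pile $P$, let $\mathcal{G}=\{S\subseteq P: S\in\mathcal{F}\}$, $t=2^d-|\mathcal{G}|$, $\mathcal{M}=2^{P}\setminus\mathcal{G}$, and $\mathcal{N}=\{P\setminus M: M\in\mathcal{M}\}$ (so $|\mathcal{N}|=t$ and $\mathcal{N}$ is hereditary). *)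

From HB Require Import structures.
From mathcomp Require Import all_boot all_order all_algebra.
Set Implicit Arguments. Unset Strict Implicit. Unset Printing Implicit Defensive.
Import Order.TTheory GRing.Theory Num.Theory.

Section Fam.
Variable n : nat.
Implicit Types (F : {set {set 'I_n}}) (A B P Q : {set 'I_n}) (x y z : 'I_n).

Definition hereditary F := forall A B, B \in F -> A \subset B -> A \in F.

Definition deg F x : nat := #|[set A in F | x \in A]|.

Definition nbhd F x : {set 'I_n} := \bigcup_(A in F | x \in A) A.

Definition weight F x : rat := (\sum_(A in F | x \in A) (#|A|%:R)^-1)%R.

Definition good F d x := d.+1 <= #|nbhd F x|.
Definition bad F d x := #|nbhd F x| == d.

Definition is_pile F d P :=
  [/\ #|P| = d,
      (forall y, y \in P -> P \subset nbhd F y) &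
      exists2 z, z \in P & nbhd F z = P].

Definition isolated_pile F d P :=
  is_pile F d P /\ (forall Q, is_pile F d Q -> Q != P -> [disjoint P & Q]).

Definition pileG F P : {set {set 'I_n}} := [set S in powerset P | S \in F].
Definition pile_t F d P : nat := 2 ^ d - #|pileG F P|.
Definition pileM F P : {set {set 'I_n}} := powerset P :\: pileG F P.
Definition pileN F P : {set {set 'I_n}} := [set P :\: M | M in pileM F P].
End Fam.

From HB Require Import structures.
From mathcomp Require Import all_boot all_order all_algebra.
From mathcomp Require Import zify.
Import Order.TTheory GRing.Theory Num.Theory.
Set Implicit Arguments. Unset Strict Implicit. Unset Printing Implicit Defensive.

(* Write [t = |N|], [k = t + 1 - c] and, for [x] in [P], [out(x)] for the
   number of members of [F] through [x] that are not contained in [P].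
   Complementation in [P] gives [#{A in G | x in A} + #{N in N | x \notin N}
   = 2^(d-1)], so the degree condition bounds the members of [N] missing [x]
   by [c - 1 + out(x)].  The weight of [P] is [|G| - 1] plus the weight [W]
   of the sets leaving [P], so the hypothesis says [W < k].  A good vertex
   sees such a set of size [2], hence contributes [1/2] to [W]; a bad vertex
   has [out(x) = 0], so it lies in at least [k] members of [N] and
   [{x} \in N], and at the vertex [z] with [N(z) = P], heredity of [N] gives
   [t <= 2 (c - 1)].  If [k >= 2], members of [N] have at most [p + 1]
   elements for [p = floor(log2 d)], a set of size [m] leaving [P] forces
   weight [2^(m-2)/m] by heredity, and double counting
   [d k <= sum_x min(out(x), 2^(p+1)) + sum_N |N|] against [W < k]
   contradicts [d >= 50].  Hence [t = c], at most one vertex is good, and [N]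
   consists of the empty set and singletons. *)

Lemma setDDK (T : finType) (P M : {set T}) : M \subset P -> P :\: (P :\: M) = M.
Proof. by move=> sMP; rewrite setDDr setDv set0U (setIidPr sMP). Qed.

Lemma sum_nat_card (I : finType) (A : {pred I}) (Q : pred I) :
  \sum_(i in A) (Q i : nat) = #|[set i in A | Q i]|.
Proof. by rewrite -sum1dep_card big_mkcondr; apply: eq_bigr => i _; case: (Q i). Qed.

Lemma card_powerset_mem (T : finType) (P : {set T}) x : x \in P ->
  #|[set A in powerset P | x \in A]| = 2 ^ #|P|.-1.
Proof.
move=> xP; rewrite -(card_in_imset (f := fun A => A :\ x)) => [|A1 A2]; last first.
  by rewrite !inE => /andP [_ x1] /andP [_ x2] e; rewrite -(setD1K x1) e setD1K.
rewrite (_ : [set _ | _ in _] = powerset (P :\ x)) ?card_powerset ?(cardsD1 x P) ?xP //.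
apply/setP => B; rewrite powersetE; apply/imsetP/idP => [[A] | sB].
  by rewrite inE powersetE => /andP [sAP _] ->; rewrite setSD.
have xB : x \notin B by apply/negP => /(subsetP sB); rewrite !inE eqxx.
exists (x |: B); last by rewrite setU1K.
by rewrite inE powersetE setU11 andbT subUset sub1set xP (subset_trans sB) ?subD1set.
Qed.

(* [m |-> 2^m / (m + 2)] is nondecreasing. *)
Lemma leq_exp2_mul_add2 r m : r <= m -> 2 ^ r * (m + 2) <= (r + 2) * 2 ^ m.
Proof.
elim: m => [|m IHm] le_rm; first by move: le_rm; rewrite leqn0 => /eqP ->.
case: (ltngtP r m.+1) le_rm => // [lt_rm _ | -> _]; last by rewrite mulnC.
have := IHm lt_rm; rewrite expnS; move: (2 ^ r) (2 ^ m) => a b; nia.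
Qed.

Lemma linear_le_of_exp2_le p d : 50 <= d -> 2 ^ p <= d -> 5 * p + 7 <= d.
Proof.
move=> d_ge50 exp_le; case: (leqP p 8) => [|p_gt8]; first lia.
suff : 5 * p + 7 <= 2 ^ p by lia.
elim: p p_gt8 {exp_le} => // p IHp; rewrite ltnS leq_eqVlt => /orP [/eqP <- // | /IHp].
by rewrite expnS; lia.
Qed.

Section Definitions.
Variable n : nat.
Implicit Types (F : {set {set 'I_n}}) (P : {set 'I_n}) (x : 'I_n).

Definition out_sets F P x : {set {set 'I_n}} :=
  [set A in F | (x \in A) && ~~ (A \subset P)].
Definition out_deg F P x : nat := #|out_sets F P x|.
Definition out_weight F P x : rat := (\sum_(A in out_sets F P x) (#|A|%:R)^-1)%R.

Definition deg_pileN F P x : nat := #|[set N in pileN F P | x \in N]|.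
Definition codeg_pileN F P x : nat := #|[set N in pileN F P | x \notin N]|.
End Definitions.

Section PileCounting.
Variables (n : nat) (F : {set {set 'I_n}}) (P : {set 'I_n}).
Implicit Types (A M N : {set 'I_n}) (x : 'I_n).

Lemma mem_pileG A : (A \in pileG F P) = (A \subset P) && (A \in F).
Proof. by rewrite /pileG !inE. Qed.

Lemma mem_pileM M : (M \in pileM F P) = (M \subset P) && (M \notin F).
Proof. by rewrite /pileM inE mem_pileG powersetE; case: (M \subset P); case: (M \in F). Qed.

Lemma mem_pileN N : (N \in pileN F P) = (N \subset P) && (P :\: N \notin F).
Proof.
apply/imsetP/andP => [[M] | [sNP nF]].
- by rewrite mem_pileM => /andP [sMP nM] ->; rewrite subsetDl setDDK.
- by exists (P :\: N); rewrite ?mem_pileM ?subsetDl ?setDDK.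
Qed.

Lemma card_pileN : #|pileN F P| = 2 ^ #|P| - #|pileG F P|.
Proof.
rewrite card_in_imset => [|M1 M2]; last first.
  by rewrite !mem_pileM => /andP [s1 _] /andP [s2 _] e; rewrite -(setDDK s1) e setDDK.
rewrite /pileM cardsD -card_powerset (setIidPr _) //.
by apply/subsetP => A; rewrite mem_pileG powersetE => /andP [].
Qed.

Lemma card_pileG : #|pileG F P| + #|pileN F P| = 2 ^ #|P|.
Proof.
rewrite card_pileN subnKC // -card_powerset; apply: subset_leq_card.
by apply/subsetP => A; rewrite mem_pileG powersetE => /andP [].
Qed.

Lemma deg_split x : deg F x = #|[set A in pileG F P | x \in A]| + out_deg F P x.
Proof.
rewrite /deg /out_deg -(cardsID (powerset P)); congr (_ + _); apply: eq_card => A;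
  by rewrite /pileG !inE; case: (A \in F); case: (x \in A); case: (A \subset P).
Qed.

Lemma deg_add_codeg_pileN x : deg_pileN F P x + codeg_pileN F P x = #|pileN F P|.
Proof.
rewrite -(cardsID [set N : {set 'I_n} | x \in N] (pileN F P)).
by congr (_ + _); apply: eq_card => N; rewrite !inE andbC.
Qed.

(* [setD P] maps the subsets of [P] containing [x] that are not in [F] onto
   the members of [N] missing [x]. *)
Lemma card_pileG_mem_add_codeg_pileN x : x \in P ->
  #|[set A in pileG F P | x \in A]| + codeg_pileN F P x = 2 ^ #|P|.-1.
Proof.
move=> xP; rewrite -(card_powerset_mem xP) -(cardsID F [set A in powerset P | x \in A]).
congr (_ + _).
  by apply: eq_card => A; rewrite /pileG !inE -!andbA (andbC (A \in F)).
rewrite -[RHS](card_in_imset (f := setD P)) => [|M1 M2]; last first.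
  by rewrite !inE => /andP [_ /andP [s1 _]] /andP [_ /andP [s2 _]] e;
    rewrite -(setDDK s1) e setDDK.
apply: eq_card => N; rewrite inE; apply/andP/imsetP => [[] | [M]].
  rewrite mem_pileN => /andP [sNP nF] xN; exists (P :\: N); last by rewrite setDDK.
  by rewrite !inE subsetDl nF xP xN.
rewrite !inE => /andP [nF /andP [sMP xM]] ->.
by rewrite mem_pileN subsetDl setDDK // nF !inE xM.
Qed.

Lemma sum_deg_pileN : \sum_(x in P) deg_pileN F P x = \sum_(N in pileN F P) #|N|.
Proof.
under eq_bigr => x _ do rewrite /deg_pileN -sum_nat_card.
rewrite exchange_big /=; apply: eq_bigr => N; rewrite mem_pileN => /andP [sNP _].
rewrite sum_nat_card; apply: eq_card => x; rewrite inE.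
by case xN: (x \in N); rewrite ?andbT ?andbF // (subsetP sNP).
Qed.

Local Open Scope ring_scope.

Lemma out_weight_ge0 x : 0 <= out_weight F P x.
Proof. by apply: sumr_ge0 => A _; rewrite invr_ge0. Qed.

(* Each nonempty member of [G] spreads total weight exactly [1] over [P]. *)
Lemma sum_weight_pile : set0 \in F ->
  \sum_(x in P) weight F x = (#|pileG F P| - 1)%:R + \sum_(x in P) out_weight F P x.
Proof.
move=> F0; rewrite /weight /out_weight.
under eq_bigr => x _ do rewrite (bigID (fun A => A \subset P)) /=.
rewrite big_split /=; congr (_ + _); last first.
  by apply: eq_bigr => x _; apply: eq_bigl => A; rewrite inE andbA.
have inner x : \sum_(A | (A \in F) && (x \in A) && (A \subset P)) #|A|%:R^-1
    = \sum_(A in pileG F P) (if x \in A then #|A|%:R^-1 else 0) :> rat.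
  rewrite big_mkcond [RHS]big_mkcond; apply: eq_bigr => A _.
  by rewrite /pileG !inE; case: (A \in F); case: (x \in A); case: (A \subset P).
under eq_bigr => x _ do rewrite inner.
rewrite exchange_big /=.
have G0 : set0 \in pileG F P by rewrite mem_pileG sub0set F0.
rewrite (big_setD1 _ G0) /= big1 ?add0r => [|x _]; last by rewrite inE.
rewrite (eq_bigr (fun _ => 1)) => [|A]; last first.
  rewrite !inE => /andP [nA0 /andP [sAP _]]; rewrite -big_mkcondr /=.
  rewrite (eq_bigl (mem A)) => [|x]; last by case xA: (x \in A); rewrite ?andbT ?andbF ?(subsetP sAP).
  by rewrite sumr_const -[LHS]mulr_natr mulVf // pnatr_eq0 cards_eq0.
by rewrite sumr_const (cardsD1 set0 (pileG F P)) G0 add1n subn1.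
Qed.
End PileCounting.

Section Hereditary.
Variables (n : nat) (F : {set {set 'I_n}}) (P : {set 'I_n}).
Hypothesis hF : hereditary F.
Implicit Types (A B N : {set 'I_n}) (x : 'I_n).

Lemma pileN_subset_closed N N' :
  N \in pileN F P -> N' \subset N -> N' \in pileN F P.
Proof.
rewrite !mem_pileN => /andP [sNP nF] sN'N.
rewrite (subset_trans sN'N sNP); apply: contra nF => /hF; apply; exact: setDS.
Qed.

Lemma exp_card_le_pileN N : N \in pileN F P -> 2 ^ #|N| <= #|pileN F P|.
Proof.
move=> NN; rewrite -card_powerset; apply: subset_leq_card; apply/subsetP => N'.
by rewrite powersetE; apply: pileN_subset_closed.
Qed.

Lemma deg_le_codeg_pileN x : deg_pileN F P x <= codeg_pileN F P x.
Proof.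
rewrite -[X in X <= _](card_in_imset (f := fun N => N :\ x)) => [|N1 N2]; last first.
  by rewrite !inE => /andP [_ x1] /andP [_ x2] e; rewrite -(setD1K x1) e setD1K.
apply/subset_leq_card/subsetP => N' /imsetP [N]; rewrite inE => /andP [NN _] ->.
by rewrite inE setD11 andbT (pileN_subset_closed NN) ?subD1set.
Qed.

Lemma card_interval_hereditary A B :
  A \in F -> B \subset A -> 2 ^ #|A :\: B| <= #|[set S in F | (B \subset S) && (S \subset A)]|.
Proof.
move=> AF sBA; rewrite -card_powerset -(card_in_imset (f := setU B)) => [|U1 U2]; last first.
  have UBK (U : {set 'I_n}) : U \subset A :\: B -> (B :|: U) :\: B = U.
    move=> sU; apply/setP => z; rewrite !inE.
    by case: (boolP (z \in U)) => [/(subsetP sU) | _]; rewrite ?orbT ?orbF ?andNb ?andbT // inE => /andP [].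
  by rewrite !powersetE => s1 s2 e; rewrite -(UBK _ s1) e UBK.
apply/subset_leq_card/subsetP => S /imsetP [U]; rewrite powersetE => sU ->.
have sBUA : B :|: U \subset A by rewrite subUset sBA (subset_trans sU (subsetDl _ _)).
by rewrite inE subsetUl sBUA (hF AF sBUA).
Qed.

Local Open Scope ring_scope.

(* With [y] a point of [A] outside [P], every member of [F] between [{x, y}]
   and [A] is counted in [out_weight], and there are [2^(|A|-2)] of them. *)
Lemma out_weight_ge_member x A : A \in out_sets F P x ->
  (2 ^ (#|A| - 2))%:R / #|A|%:R <= out_weight F P x.
Proof.
rewrite inE => /andP [AF /andP [xA /subsetPn [y yA yP]]].
set B := [set x; y].
have sBA : B \subset A by rewrite subUset !sub1set xA yA.
have A_gt0 : (0 < #|A|)%N by apply/card_gt0P; exists x.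
set I := [set S in F | (B \subset S) && (S \subset A)].
have sIout : I \subset out_sets F P x.
  apply/subsetP => S; rewrite !inE => /andP [SF /andP [sBS _]].
  rewrite SF (subsetP sBS) ?set21 //=; apply: contraNN yP => /subsetP; apply.
  by rewrite (subsetP sBS) ?set22.
apply: (@le_trans _ _ (\sum_(S in I) (#|A|%:R)^-1)).
  rewrite sumr_const -[X in _ <= X]mulr_natl ler_wpM2r ?invr_ge0 // ler_nat.
  apply: leq_trans (card_interval_hereditary AF sBA); rewrite leq_exp2l //.
  by rewrite cardsD (setIidPr sBA) leq_sub2l // cards2; case: (x != y).
rewrite /out_weight [X in _ <= X](big_setID I) /= (setIidPr sIout) -[X in X <= _]addr0.
apply: lerD; last by apply: sumr_ge0 => S _; rewrite invr_ge0.
apply: ler_sum => S; rewrite inE => /andP [_ /andP [sBS sSA]].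
have S_gt0 : (0 < #|S|)%N by apply/card_gt0P; exists y; rewrite (subsetP sBS) ?set22.
by rewrite lef_pV2 ?posrE ?ltr0n // ler_nat subset_leq_card.
Qed.

(* Sets of size at most [r + 2] contribute at least [1/(r + 2)] each; one
   larger set already forces weight [2^r/(r + 2)] by the previous lemma. *)
Lemma out_deg_min_le x r :
  (minn (out_deg F P x) (2 ^ r))%:R <= (r + 2)%:R * out_weight F P x.
Proof.
have out_gt0 A : A \in out_sets F P x -> (0 < #|A|)%N.
  by rewrite inE => /and3P [_ xA _]; apply/card_gt0P; exists x.
case: (boolP [exists A, (A \in out_sets F P x) && (r + 2 < #|A|)%N]) =>
    [/existsP [A /andP [Aout bigA]] | /existsPn small].
- apply: (@le_trans _ _ (2 ^ r)%:R); first by rewrite ler_nat geq_minr.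
  apply: le_trans (ler_wpM2l (ler0n _ _) (out_weight_ge_member Aout)).
  rewrite mulrA ler_pdivlMr ?ltr0n ?out_gt0 // -!natrM ler_nat.
  have le_rA : (r <= #|A| - 2)%N by lia.
  by have := leq_exp2_mul_add2 le_rA; rewrite subnK //; lia.
- apply: (@le_trans _ _ (out_deg F P x)%:R); first by rewrite ler_nat geq_minl.
  rewrite /out_deg -sum1_card natr_sum /out_weight mulr_sumr; apply: ler_sum => A Aout.
  have := small A; rewrite Aout /= -leqNgt => smallA.
  by rewrite ler_pdivlMr ?ltr0n ?out_gt0 // mul1r ler_nat.
Qed.
End Hereditary.

Lemma sub_nbhd n (F : {set {set 'I_n}}) x (A : {set 'I_n}) :
  A \in F -> x \in A -> A \subset nbhd F x.
Proof. by move=> AF xA; apply: (bigcup_sup A (P := fun A => (A \in F) && (x \in A))); rewrite AF. Qed.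

Section Pile.
Variables (n d : nat) (F : {set {set 'I_n}}) (P : {set 'I_n}).
Hypothesis pileP : is_pile F d P.
Implicit Types (x : 'I_n).

Lemma good_bad x : x \in P -> good F d x = ~~ bad F d x.
Proof.
case: pileP => cP sub _ xP; have := subset_leq_card (sub x xP).
by rewrite cP /good /bad ltn_neqAle eq_sym => ->; rewrite andbT.
Qed.

Lemma out_deg_bad x : x \in P -> bad F d x -> out_deg F P x = 0.
Proof.
case: pileP => cP sub _ xP /eqP bx.
have nbhdP : nbhd F x = P by apply/eqP; rewrite eq_sym eqEcard (sub x xP) bx cP leqnn.
apply/eqP; rewrite cards_eq0; apply/eqP/setP => A; rewrite !inE.
by apply/negP => /and3P [AF xA]; rewrite -nbhdP sub_nbhd.
Qed.

Lemma out_weight_good x : hereditary F -> x \in P ->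
  ((good F d x)%:R / 2 <= out_weight F P x)%R.
Proof.
move=> hF xP; case gx: (good F d x); last by rewrite mul0r out_weight_ge0.
case: pileP => cP _ _.
have /subsetPn [y /bigcupP [A /andP [AF xA] yA] yP] : ~~ (nbhd F x \subset P).
  by apply: contraTN gx => /subset_leq_card; rewrite cP /good -ltnNge.
have neq_xy : x != y by apply/eqP => exy; rewrite -exy xP in yP.
have pair_out : [set x; y] \in out_sets F P x.
  rewrite !inE eqxx (hF _ _ AF) ?subUset ?sub1set ?xA ?yA //=.
  by rewrite (negbTE yP) andbF.
by have := out_weight_ge_member hF pair_out; rewrite cards2 neq_xy.
Qed.
End Pile.

Section SmallWeightPile.
Variables (n d c : nat) (F : {set {set 'I_n}}) (P : {set 'I_n}).
Hypotheses (d_ge50 : 50 <= d) (c_gt0 : 0 < c) (c_le_d : c <= d) (hF : hereditary F).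
Hypothesis min_deg : forall x, 2 ^ d.-1 - c + 1 <= deg F x.
Hypothesis pileP : is_pile F d P.
Hypothesis small_weight : (\sum_(x in P) weight F x < (2 ^ d - c)%:R)%R.

Local Notation t := #|pileN F P|.
Local Notation k := (t + 1 - c).
Local Notation bad_in_P := [set x in P | bad F d x].
Local Notation large_pileN := [set N in pileN F P | 1 < #|N|].

Lemma card_P : #|P| = d.
Proof. by case: pileP. Qed.

Lemma pile_tE : pile_t F d P = t.
Proof. by rewrite card_pileN card_P. Qed.

Lemma pile_center : exists2 z, z \in P & bad F d z.
Proof. by case: pileP => cP _ [z zP nz]; exists z; rewrite // /bad nz cP. Qed.

Lemma codeg_le_out_deg x : x \in P -> codeg_pileN F P x <= c - 1 + out_deg F P x.
Proof.
move=> xP; have := min_deg x; rewrite (deg_split F P).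
have := card_pileG_mem_add_codeg_pileN F xP; rewrite card_P.
have : c <= 2 ^ d.-1.
  by apply: leq_trans c_le_d _; case: (d) d_ge50 => // d' _; exact: ltn_expl.
move: (2 ^ d.-1) => e; lia.
Qed.

Lemma set0_in_F : set0 \in F.
Proof.
have [z _ _] := pile_center.
have : 0 < deg F z by apply: leq_trans (min_deg z); rewrite addn1.
rewrite card_gt0.
by case/set0Pn => A; rewrite inE => /andP [/hF AF _]; apply: AF (sub0set A).
Qed.

Lemma sum_out_weight_lt : (\sum_(x in P) out_weight F P x < k%:R)%R.
Proof.
have := card_pileG F P; rewrite card_P => cardG.
move: small_weight; rewrite (sum_weight_pile P set0_in_F) => lt_sum.
have lt_G : #|pileG F P| - 1 < 2 ^ d - c.
  rewrite -(ltr_nat rat); apply: le_lt_trans lt_sum.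
  by rewrite lerDl sumr_ge0 // => x _; apply: out_weight_ge0.
have G_gt0 : 0 < #|pileG F P| by apply/card_gt0P; exists set0; rewrite mem_pileG sub0set set0_in_F.
have -> : k = (2 ^ d - c) - (#|pileG F P| - 1) by move: (2 ^ d) cardG lt_G => e; lia.
by rewrite natrB ?(ltnW lt_G) // ltrBrDl.
Qed.

Lemma c_le_t : c <= t.
Proof.
have W_ge0 : (0 <= \sum_(x in P) out_weight F P x)%R.
  by apply: sumr_ge0 => x _; apply: out_weight_ge0.
by have := le_lt_trans W_ge0 sum_out_weight_lt; rewrite ltr0n; lia.
Qed.

Lemma card_good_lt : #|[set x in P | good F d x]| < 2 * k.
Proof.
rewrite -(ltr_nat rat) natrM mulrC -ltr_pdivrMr //; apply: le_lt_trans sum_out_weight_lt.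
rewrite -sum_nat_card natr_sum mulr_suml; apply: ler_sum => x xP.
exact: out_weight_good.
Qed.

Lemma bad_deg_pileN x : x \in P -> bad F d x -> k <= deg_pileN F P x.
Proof.
move=> xP bx; have := codeg_le_out_deg xP; rewrite (out_deg_bad pileP xP bx).
by have := deg_add_codeg_pileN F P x; lia.
Qed.

Lemma bad_set1_pileN x : x \in P -> bad F d x -> [set x] \in pileN F P.
Proof.
move=> xP bx; have : 0 < deg_pileN F P x by apply: leq_trans (bad_deg_pileN xP bx); have := c_le_t; lia.
by rewrite card_gt0 => /set0Pn [N]; rewrite inE => /andP [NN xN]; rewrite (pileN_subset_closed hF NN) ?sub1set.
Qed.

Lemma set0_pileN : set0 \in pileN F P.
Proof.
have [z zP bz] := pile_center.
by apply: (pileN_subset_closed hF (bad_set1_pileN zP bz)); rewrite sub0set.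
Qed.

(* At a vertex [z] with [N(z) = P], [deg_pileN z <= codeg_pileN z <= c - 1]. *)
Lemma t_le_double : t <= 2 * (c - 1).
Proof.
have [z zP bz] := pile_center.
have := codeg_le_out_deg zP; rewrite (out_deg_bad pileP zP bz).
by have := deg_add_codeg_pileN F P z; have := deg_le_codeg_pileN P hF z; lia.
Qed.

Lemma card_large_pileN : 1 + #|bad_in_P| + #|large_pileN| <= t.
Proof.
set small := set0 |: [set [set x] | x in bad_in_P].
have card_small : #|small| = 1 + #|bad_in_P|.
  rewrite cardsU1 card_imset; last exact: set1_inj.
  by case: imsetP => // [[x _ /esym/eqP]]; rewrite -cards_eq0 cards1.
have small_sub : small \subset [set N in pileN F P | #|N| <= 1].
  apply/subsetP => N; rewrite !inE => /orP [/eqP -> | /imsetP [x]].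
    by rewrite set0_pileN cards0.
  by rewrite inE => /andP [xP bx] ->; rewrite bad_set1_pileN // cards1.
rewrite -card_small -(cardsID [set N : {set 'I_n} | #|N| <= 1] (pileN F P)).
apply: leq_add; first apply: leq_trans (subset_leq_card small_sub) _.
  by apply: subset_leq_card; apply/subsetP => N; rewrite !inE andbC.
by apply: subset_leq_card; apply/subsetP => N; rewrite !inE -ltnNge andbC.
Qed.

Lemma card_good_add_bad : #|[set x in P | good F d x]| + #|bad_in_P| = d.
Proof.
rewrite -[RHS]card_P -(cardsID [set x | good F d x] P); congr (_ + _); apply: eq_card => x.
  by rewrite !inE andbC.
by rewrite !inE; case xP: (x \in P); rewrite ?andbF //= (good_bad pileP xP) negbK andbT.
Qed.

Lemma exp_card_pileN_lt N : N \in pileN F P -> 2 ^ #|N| < 2 * d.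
Proof. by move=> NN; have := exp_card_le_pileN hF NN; have := t_le_double; lia. Qed.

Lemma sum_card_pileN_le q : (forall N, N \in pileN F P -> #|N| <= q.+1) ->
  \sum_(N in pileN F P) #|N| <= (t - 1) + q * #|large_pileN|.
Proof.
move=> card_le.
apply: (@leq_trans (\sum_(N in pileN F P) ((N != set0) + q * (1 < #|N|)))).
  apply: leq_sum => N NN; have := card_le N NN; rewrite -cards_eq0.
  by case: #|N| => [|[|m]] //= ?; lia.
rewrite big_split /= -big_distrr /= !sum_nat_card leq_add2r.
have -> : [set N in pileN F P | N != set0] = pileN F P :\ set0.
  by apply/setP => N; rewrite !inE andbC.
by rewrite (cardsD1 set0 (pileN F P)) set0_pileN add1n subn1.
Qed.

Lemma sum_min_out_deg_lt r : \sum_(x in P) minn (out_deg F P x) (2 ^ r) < (r + 2) * k.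
Proof.
rewrite -(ltr_nat rat) natr_sum natrM.
apply: (@le_lt_trans _ _ ((r + 2)%:R * \sum_(x in P) out_weight F P x)%R).
  by rewrite mulr_sumr; apply: ler_sum => x _; apply: out_deg_min_le.
by rewrite ltr_pM2l ?ltr0n ?addn2 // sum_out_weight_lt.
Qed.

Lemma mul_k_le_sum r : k <= 2 ^ r ->
  d * k <= \sum_(x in P) minn (out_deg F P x) (2 ^ r) + \sum_(N in pileN F P) #|N|.
Proof.
move=> k_le; rewrite -sum_deg_pileN -big_split /= -{1}card_P -sum_nat_const.
apply: leq_sum => x xP; have := codeg_le_out_deg xP; have := deg_add_codeg_pileN F P x.
by move: #|pileN F P| (2 ^ r) k_le => T e; rewrite /minn; case: ltnP; lia.
Qed.

Lemma t_eq_c : t = c.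
Proof.
apply/eqP; rewrite eqn_leq c_le_t andbT leqNgt; apply/negP => lt_ct.
set p := trunc_log 2 d.
have p_le : 2 ^ p <= d by apply: trunc_logP; lia.
have p_lt : d < 2 ^ p.+1 by apply: trunc_log_ltn.
have card_le N : N \in pileN F P -> #|N| <= p.+1.
  move=> NN; rewrite -ltnS -(ltn_exp2l _ _ (isT : 1 < 2)) expnS.
  by have := exp_card_pileN_lt NN; lia.
have k_le : k <= 2 ^ p.+1 by have := t_le_double; lia.
have := mul_k_le_sum k_le; have := sum_min_out_deg_lt p.+1.
have := sum_card_pileN_le card_le; have := card_large_pileN.
have := card_good_lt; have := card_good_add_bad.
have := linear_le_of_exp2_le d_ge50 p_le.
(* [d k <= (p + 3) k + (t - 1) + p L] with [L <= 3 (k - 1)] and [t < k + d]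
   forces [d < 5 p + 7] when [k >= 2]. *)
move: (\sum_(x in P) _) (\sum_(N in _) _) #|bad_in_P| #|large_pileN| => X S b L.
move: #|[set x in P | good F d x]| => g; nia.
Qed.

Lemma small_weight_pile_structure :
  [/\ #|[set x in P | good F d x]| <= 1, t = c,
      (forall N, N \in pileN F P -> #|N| <= 1) &
      (forall x, x \in P -> bad F d x -> [set x] \in pileN F P)].
Proof.
have good_lt := card_good_lt; have large_le := card_large_pileN.
have gb := card_good_add_bad; rewrite t_eq_c in good_lt large_le.
have [good_le1 L0] : #|[set x in P | good F d x]| <= 1 /\ #|large_pileN| = 0.
  by move: #|large_pileN| #|bad_in_P| #|[set x in P | good F d x]| large_le gb good_lt => L b g; lia.
split => //; first exact: t_eq_c.
- move=> N NN; rewrite leqNgt; apply/negP => large.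
  by move/eqP: L0; rewrite cards_eq0 => /eqP/setP/(_ N); rewrite !inE NN large.
- exact: bad_set1_pileN.
Qed.

End SmallWeightPile.

Unset Implicit Arguments.
Theorem mainTheorem15 (n d c : nat) (F : {set {set 'I_n}}) (P : {set 'I_n}) :
  50 <= d -> 1 <= c <= d ->
  hereditary F ->
  (forall x : 'I_n, 2 ^ d.-1 - c + 1 <= deg F x) ->
  isolated_pile F d P ->
  (\sum_(x in P) weight F x < (2 ^ d - c)%:R)%R ->
  [/\ #|[set x in P | good F d x]| <= 7,
      pile_t F d P <= d + 4,
      (forall N, N \in pileN F P -> #|N| <= 3) &
      (forall x, x \in P -> bad F d x -> [set x] \in pileN F P)].
Proof.
move=> d_ge50 /andP [c_gt0 c_le_d] hF min_deg [pileP _] small_weight.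
have [good_le1 t_c size_le1 bad_set1] :=
  small_weight_pile_structure d_ge50 c_gt0 c_le_d hF min_deg pileP small_weight.
split => //.
- exact: leq_trans good_le1 _.
- by rewrite (pile_tE pileP) t_c (leq_trans c_le_d) ?leq_addr.
- by move=> N /size_le1 /leq_trans; apply.
Qed.
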